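(* In the curved-exam game described in the context, there exists a no-curve pure Nash equilibrium in which every student $i$ plays $y_i^*=\alpha_i$ if and only if $$\bar\alpha:=\frac1n\sum_{i=1}^n\alpha_i\ \ge\ \frac1n\max_{1\le i\le n}\big[(n-1)J_i(\alpha_i,n,m)+\alpha_i\big].$$ Moreover, if $m\in(0,1)$ is fixed and $(\alpha_i)_{i\ge1}$ is any sequence in $(0,1)$, then $\frac1n\max_{1\le i\le n}\big[(n-1)J_i(\alpha_i,n,m)+\alpha_i\big]\to m$ as $n\to\infty$.
   Context: The curved-exam game: fix $n\ge2$, abilities $\alpha_1,\dots,\alpha_n\in(0,1)$, target mean $m\in(0,1)$. Student $i$ chooses $x_i\in[0,1]$; $\bar x=\frac1n\sum_j x_j$, $\bar x_{-i}=\frac1{n-1}\sum_{j\ne i}x_j$. Grade $G_i(x)=x_i+\max(m-\bar x,0)$ (not truncated at 1); payoff $U_i(x)=G_i(x)^{\alpha_i}(1-x_i)^{1-\alpha_i}$. A no-curve equilibrium is a pure Nash equilibrium with $\bar x\ge m$. For each $i$, $J_i=J_i(\alpha_i,n,m)$ denotes the unique zero in $\big[\frac{nm-\alpha_i}{n-1},\frac{nm}{n-1}-\frac{\alpha_i}{n-\alpha_i}\big]$ of the strictly decreasing function $\phi_i(z)=\big(m+\frac{n-1}{n}(1-z)\big)^{\alpha_i}\big(1+\frac{nm}{n-1}-z\big)^{1-\alpha_i}-1$. *)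

From HB Require Import structures.
From mathcomp Require Import all_boot all_order all_algebra.
From mathcomp Require Import all_classical all_reals all_analysis.
Set Implicit Arguments. Unset Strict Implicit. Unset Printing Implicit Defensive.
Import Order.TTheory GRing.Theory Num.Theory.
Import numFieldNormedType.Exports.
Local Open Scope classical_set_scope.
Local Open Scope ring_scope.

Section CurvedExam.
Variable R : realType.

(* Students are indexed 0, ..., n-1; a profile/abilities are nat -> R,
   only the first n entries matter. *)

Definition xbar (n : nat) (x : nat -> R) : R := (\sum_(j < n) x j) / n%:R.

(* grade G_i(x) = x_i + max(m - xbar, 0) (not truncated at 1) *)
Definition grade (n : nat) (m : R) (x : nat -> R) (i : nat) : R :=
  x i + Num.max (m - xbar n x) 0.

Definition payoff (n : nat) (m : R) (alpha : nat -> R) (x : nat -> R) (i : nat) : R :=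
  (grade n m x i) `^ (alpha i) * (1 - x i) `^ (1 - alpha i).

Definition deviate (x : nat -> R) (i : nat) (y : R) : nat -> R :=
  fun j => if j == i then y else x j.

Definition is_pure_NE (n : nat) (m : R) (alpha x : nat -> R) : Prop :=
  (forall i, (i < n)%N -> 0 <= x i <= 1) /\
  (forall i, (i < n)%N -> forall y : R, 0 <= y <= 1 ->
      payoff n m alpha (deviate x i y) i <= payoff n m alpha x i).

Definition is_no_curve_NE (n : nat) (m : R) (alpha x : nat -> R) : Prop :=
  is_pure_NE n m alpha x /\ m <= xbar n x.

Definition phi (a : R) (n : nat) (m z : R) : R :=
  (m + (n%:R - 1) / n%:R * (1 - z)) `^ a *
  (1 + n%:R * m / (n%:R - 1) - z) `^ (1 - a) - 1.

Definition J_lo (a : R) (n : nat) (m : R) : R := (n%:R * m - a) / (n%:R - 1).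
Definition J_hi (a : R) (n : nat) (m : R) : R :=
  n%:R * m / (n%:R - 1) - a / (n%:R - a).

(* J(a, n, m): the (unique, by the paper) zero of phi in [J_lo, J_hi] *)
Definition J (a : R) (n : nat) (m : R) : R :=
  xget 0 [set z : R | J_lo a n m <= z <= J_hi a n m /\ phi a n m z = 0].

Definition threshold (n : nat) (m : R) (alpha : nat -> R) : R :=
  (\big[Num.max/((n%:R - 1) * J (alpha 0%N) n m + alpha 0%N)]_(i < n)
      ((n%:R - 1) * J (alpha i) n m + alpha i)) / n%:R.

End CurvedExam.

From HB Require Import structures.
From mathcomp Require Import all_boot all_order all_algebra.
From mathcomp Require Import all_classical all_reals all_analysis.
From mathcomp Require Import ring lra.
Import Order.TTheory GRing.Theory Num.Theory.
Import numFieldNormedType.Exports.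
Local Open Scope classical_set_scope.
Local Open Scope ring_scope.

(* The payoff is a Cobb-Douglas function of the grade and the
   leisure, so weighted AM-GM gives u^a v^(1-a) <= a^a (1-a)^(1-a) (u + v),
   with equality when u : v = a : 1 - a.  Write the others' total as
   T = n m - (n-1) w and c = (n-1)/n.  A deviation y earns y^a (1-y)^(1-a)
   <= a^a (1-a)^(1-a) when no curve is triggered, and c^a (w+y)^a (1-y)^(1-a)
   <= c^a (1+w) a^a (1-a)^(1-a) when it is, with equality at
   y = a - (1-a) w.  Hence playing one's ability is a best response iff
   c^a (1+w) <= 1.  On the relevant interval phi(z) = c^a (1 + n m/(n-1) - z) - 1
   is affine, so J = n m/(n-1) + 1 - c^(-a) and the condition reads
   (n-1) J_i + a_i <= sum_j a_j.  Bernoulli's inequality for c^a and c^(-a)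
   puts (n-1) J_i + a_i in [n m, n m + 1], whence the threshold lies in
   [m, m + 1/n]. *)

Section CurvedExam.
Set Implicit Arguments.
Unset Strict Implicit.
Variable R : realType.

Section CobbDouglas.

Definition cobb_douglas (a u v : R) : R := u `^ a * v `^ (1 - a).

(* The maximum of g |-> cobb_douglas a g (1 - g) on [0, 1], attained at g = a. *)
Definition peak (a : R) : R := cobb_douglas a a (1 - a).

Variable a : R.
Hypothesis a01 : 0 < a < 1.

Let a_gt0 : 0 < a. Proof. by case/andP: a01. Qed.
Let a_lt1 : a < 1. Proof. by case/andP: a01. Qed.

Lemma peak_gt0 : 0 < peak a.
Proof. by apply: mulr_gt0; apply: powR_gt0; rewrite ?subr_gt0. Qed.

Lemma cobb_douglas_le_mean (u v : R) : 0 <= u -> 0 <= v ->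
  cobb_douglas a u v <= a * u + (1 - a) * v.
Proof.
move=> u0 v0.
have := @conjugate_powR R _ _ a^-1 (1 - a)^-1 (powR_ge0 u a) (powR_ge0 v (1 - a)).
rewrite !invr_gt0 subr_gt0 a_gt0 a_lt1 !invrK -!powRrM !mulfV ?gt_eqF ?subr_gt0 //.
rewrite !powRr1 // [a * u]mulrC [(1 - a) * v]mulrC; apply => //.
by rewrite addrC subrK.
Qed.

Lemma powR_le_affine (x : R) : 0 <= x -> x `^ a <= 1 + a * (x - 1).
Proof.
move=> x0; have := cobb_douglas_le_mean x0 ler01.
rewrite /cobb_douglas powR1 !mulr1.
suff -> : 1 + a * (x - 1) = a * x + (1 - a) by [].
by ring.
Qed.

Lemma cobb_douglasM (p q u v : R) : 0 <= p -> 0 <= q -> 0 <= u -> 0 <= v ->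
  cobb_douglas a (p * u) (q * v) = cobb_douglas a p q * cobb_douglas a u v.
Proof. by move=> *; rewrite /cobb_douglas !powRM // mulrACA. Qed.

Lemma cobb_douglas_diag (s : R) : 0 <= s -> cobb_douglas a s s = s.
Proof.
move=> s0; have a_a' : a + (1 - a) = 1 by rewrite addrC subrK.
by rewrite /cobb_douglas -powRD a_a' ?oner_eq0 ?powRr1.
Qed.

Lemma cobb_douglas_le_peak (u v : R) : 0 <= u -> 0 <= v ->
  cobb_douglas a u v <= peak a * (u + v).
Proof.
move=> u0 v0; have a'_gt0 : 0 < 1 - a by rewrite subr_gt0.
have u'0 : 0 <= u / a by rewrite divr_ge0 // ltW.
have v'0 : 0 <= v / (1 - a) by rewrite divr_ge0 // ltW.
have -> : cobb_douglas a u v = cobb_douglas a (a * (u / a)) ((1 - a) * (v / (1 - a))).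
  by rewrite [a * _]mulrC [(1 - a) * _]mulrC !divfK ?gt_eqF.
rewrite cobb_douglasM ?(ltW a_gt0) ?(ltW a'_gt0) // -/(peak a).
have := cobb_douglas_le_mean u'0 v'0.
rewrite [a * _]mulrC [(1 - a) * _]mulrC !divfK ?gt_eqF //.
exact/ler_wpM2l/mulr_ge0/powR_ge0/powR_ge0.
Qed.

Lemma cobb_douglas_at_peak (s : R) : 0 <= s ->
  cobb_douglas a (a * s) ((1 - a) * s) = peak a * s.
Proof.
move=> s0; have a'_gt0 : 0 < 1 - a by rewrite subr_gt0.
by rewrite cobb_douglasM ?cobb_douglas_diag ?(ltW a_gt0) ?(ltW a'_gt0).
Qed.

End CobbDouglas.

Section Discount.
Variables (n : nat) (a : R).
Hypotheses (n_ge2 : (2 <= n)%N) (a01 : 0 < a < 1).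

Definition discount : R := ((n%:R - 1) / n%:R) `^ a.

Let n_ge2R : 2 <= n%:R :> R. Proof. by rewrite (ler_nat R 2 n). Qed.
Let a_gt0 : 0 < a. Proof. by case/andP: a01. Qed.

Lemma discount_gt0 : 0 < discount.
Proof. by apply/powR_gt0/divr_gt0; move: n_ge2R; lra. Qed.

Lemma discount_mul_le : discount * n%:R <= n%:R - a.
Proof.
move: n_ge2R a_gt0 => n2 a0.
have ratio_ge0 : 0 <= (n%:R - 1) / n%:R :> R by apply: divr_ge0; lra.
have := powR_le_affine a01 ratio_ge0; rewrite -/discount => le_b.
have -> : n%:R - a = (1 + a * ((n%:R - 1) / n%:R - 1)) * n%:R.
  by field; apply/eqP; lra.
by rewrite ler_pM2r //; lra.
Qed.

Lemma invf_discount : discount^-1 = (n%:R / (n%:R - 1)) `^ a.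
Proof.
move: n_ge2R => n2.
apply: (@mulIf _ discount); first by rewrite gt_eqF ?discount_gt0.
rewrite mulVf ?gt_eqF ?discount_gt0 // /discount -powRM; first last.
- by apply: divr_ge0; lra.
- by apply: divr_ge0; lra.
by rewrite -invf_div mulVf ?powR1 // gt_eqF //; apply: divr_gt0; lra.
Qed.

Lemma mul_invf_discount_le : (n%:R - 1) * discount^-1 <= n%:R - 1 + a.
Proof.
move: n_ge2R => n2.
have ratio_ge0 : 0 <= n%:R / (n%:R - 1) :> R by apply: divr_ge0; lra.
have := powR_le_affine a01 ratio_ge0; rewrite -invf_discount => le_b'.
have -> : n%:R - 1 + a = (n%:R - 1) * (1 + a * (n%:R / (n%:R - 1) - 1)).
  by field; apply/eqP; lra.
by rewrite ler_pM2l //; lra.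
Qed.

Lemma discount_lt1 : discount < 1.
Proof.
move: discount_mul_le n_ge2R a_gt0 => le_bn n2 a0.
by rewrite -(ltr_pM2r (_ : 0 < n%:R)) ?mul1r; lra.
Qed.

Lemma phi_closed (m z : R) : z <= 1 + n%:R * m / (n%:R - 1) ->
  phi a n m z = discount * (1 + n%:R * m / (n%:R - 1) - z) - 1.
Proof.
move: n_ge2R => n2 z_le.
have ratio_ge0 : 0 <= (n%:R - 1) / n%:R :> R by apply: divr_ge0; lra.
rewrite /phi; have -> : m + (n%:R - 1) / n%:R * (1 - z) =
    (n%:R - 1) / n%:R * (1 + n%:R * m / (n%:R - 1) - z).
  by field; apply/andP; split; apply/eqP; lra.
rewrite powRM ?subr_ge0 // -mulrA; congr (_ * _ - 1).
by apply: cobb_douglas_diag; rewrite ?subr_ge0.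
Qed.

Lemma J_closed (m : R) : J a n m = n%:R * m / (n%:R - 1) + 1 - discount^-1.
Proof.
move: n_ge2R discount_gt0 discount_mul_le mul_invf_discount_le a01.
move=> n2 b0 le_bn le_b'n /andP[a0 a1].
have n1_gt0 : 0 < n%:R - 1 :> R by lra.
have na_gt0 : 0 < n%:R - a by lra.
set K := n%:R * m / (n%:R - 1).
have b'0 : 0 < discount^-1 by rewrite invr_gt0.
have bb' : discount * discount^-1 = 1 by rewrite mulfV ?gt_eqF.
apply: xget_unique; last first.
  move=> z [/andP[_ z_hi]]; rewrite phi_closed -/K; last first.
    move: z_hi; rewrite /J_hi -/K.
    have : 0 <= a / (n%:R - a) by apply: divr_ge0; lra.
    lra.
  move=> /eqP; rewrite subr_eq0 => /eqP bz.
  have : discount^-1 * (discount * (1 + K - z)) = discount^-1 by rewrite bz mulr1.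
  by rewrite mulrA mulVf ?gt_eqF // mul1r; lra.
split; last first.
  rewrite phi_closed -/K; last lra.
  have -> : 1 + K - (K + 1 - discount^-1) = discount^-1 by ring.
  by rewrite bb' subrr.
have le_b'na : n%:R <= discount^-1 * (n%:R - a).
  by rewrite -(ler_pM2l b0) mulrA bb' mul1r.
apply/andP; split; rewrite /J_lo /J_hi -/K -subr_ge0.
  have -> : K + 1 - discount^-1 - (n%:R * m - a) / (n%:R - 1) =
      (n%:R - 1 + a - (n%:R - 1) * discount^-1) / (n%:R - 1).
    by rewrite /K; field; rewrite !gt_eqF.
  by apply: divr_ge0; lra.
have -> : K - a / (n%:R - a) - (K + 1 - discount^-1) =
    (discount^-1 * (n%:R - a) - n%:R) / (n%:R - a).
  by field; rewrite !gt_eqF.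
by apply: divr_ge0; lra.
Qed.

Lemma scaled_J (m : R) :
  (n%:R - 1) * J a n m = n%:R * m - (n%:R - 1) * (discount^-1 - 1).
Proof.
move: n_ge2R discount_gt0 => n2 b0.
by rewrite J_closed; field; rewrite !gt_eqF //; lra.
Qed.

Lemma le_scaled_J_add (m : R) : n%:R * m <= (n%:R - 1) * J a n m + a.
Proof. by move: mul_invf_discount_le; rewrite scaled_J; lra. Qed.

Lemma scaled_J_le (m : R) : (n%:R - 1) * J a n m <= n%:R * m.
Proof.
move: n_ge2R discount_gt0 discount_lt1 => n2 b0 b1.
rewrite scaled_J gerDl oppr_le0 mulr_ge0 // ?subr_ge0; first lra.
by rewrite invf_ge1 // ltW.
Qed.

Lemma scaled_J_le_iff (m w : R) :
  ((n%:R - 1) * J a n m <= n%:R * m - (n%:R - 1) * w) =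
  (discount * (1 + w) <= 1).
Proof.
move: n_ge2R discount_gt0 => n2 b0.
rewrite scaled_J lerD2l lerN2 ler_pM2l ?subr_gt0; last lra.
by rewrite lerBrDr addrC -(ler_pM2l b0) mulfV ?gt_eqF.
Qed.

End Discount.

Definition response_payoff (n : nat) (m a T y : R) : R :=
  cobb_douglas a (y + Num.max (m - (T + y) / n%:R) 0) (1 - y).

Section BestResponse.
Variables (n : nat) (m a : R).
Hypotheses (n_ge2 : (2 <= n)%N) (a01 : 0 < a < 1).

Let n_ge2R : 2 <= n%:R :> R. Proof. by rewrite (ler_nat R 2 n). Qed.

Lemma curve_bonus (w y : R) :
  m - (n%:R * m - (n%:R - 1) * w + y) / n%:R = ((n%:R - 1) * w - y) / n%:R.
Proof. by move: n_ge2R => n2; field; rewrite gt_eqF //; lra. Qed.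

Lemma response_payoff_uncurved (w y : R) : (n%:R - 1) * w <= y ->
  response_payoff n m a (n%:R * m - (n%:R - 1) * w) y = cobb_douglas a y (1 - y).
Proof.
move: n_ge2R => n2 le_y.
rewrite /response_payoff curve_bonus max_r ?addr0 //.
by rewrite pmulr_lle0 ?subr_le0 // invr_gt0; lra.
Qed.

Lemma response_payoff_curved (w y : R) : 0 <= y <= 1 -> y < (n%:R - 1) * w ->
  response_payoff n m a (n%:R * m - (n%:R - 1) * w) y =
  discount n a * cobb_douglas a (w + y) (1 - y).
Proof.
move: n_ge2R => n2 /andP[y0 y1] lt_y.
have w_gt0 : 0 < w by rewrite -(pmulr_rgt0 _ (_ : 0 < n%:R - 1)); lra.
rewrite /response_payoff curve_bonus max_l; last first.
  by rewrite pmulr_lge0 ?subr_ge0 ?invr_gt0 ?ltW //; lra.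
have -> : y + ((n%:R - 1) * w - y) / n%:R = (n%:R - 1) / n%:R * (w + y).
  by field; rewrite gt_eqF //; lra.
rewrite -[1 - y]mul1r cobb_douglasM ?subr_ge0 //; last lra.
- by rewrite /cobb_douglas powR1 mulr1 mul1r.
- by apply: divr_ge0; lra.
Qed.

Lemma response_payoff_le_peak (w y : R) : discount n a * (1 + w) <= 1 ->
  0 <= y <= 1 -> response_payoff n m a (n%:R * m - (n%:R - 1) * w) y <= peak a.
Proof.
move=> le_bw y01; have /andP[y0 y1] := y01.
have peak0 := peak_gt0 a01.
have [le_y | lt_y] := lerP ((n%:R - 1) * w) y.
  rewrite response_payoff_uncurved //.
  apply: le_trans (cobb_douglas_le_peak a01 y0 _) _; rewrite ?subr_ge0 //.
  by rewrite addrC subrK mulr1.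
rewrite response_payoff_curved //.
have wy0 : 0 <= w + y.
  move: n_ge2R lt_y => n2; rewrite -subr_gt0 => lt_y.
  have : 0 < (n%:R - 1) * w by lra.
  by rewrite pmulr_rgt0; lra.
have y'0 : 0 <= 1 - y by rewrite subr_ge0.
have := cobb_douglas_le_peak a01 wy0 y'0; rewrite addrCA addrK => le_cd.
have b0 := discount_gt0 a n_ge2.
apply: (@le_trans _ _ (discount n a * (peak a * (1 + w)))); first by rewrite ler_pM2l.
by rewrite mulrCA ger_pMr.
Qed.

Lemma response_payoff_gt_peak (w : R) : (n%:R - 1) * w <= a ->
  1 < discount n a * (1 + w) ->
  exists2 y, 0 <= y <= 1 &
    peak a < response_payoff n m a (n%:R * m - (n%:R - 1) * w) y.
Proof.
move: n_ge2R (discount_gt0 a n_ge2) (discount_mul_le n_ge2 a01) a01.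
move=> n2 b0 le_bn /andP[a0 a1] le_wa lt_bw.
have lt_a_w : a < w * (n%:R - a).
  have : discount n a * n%:R < discount n a * ((1 + w) * (n%:R - a)).
    by apply: le_lt_trans le_bn _; rewrite mulrA ltr_pMl //; lra.
  by rewrite ltr_pM2l //; lra.
have w0 : 0 < w by rewrite -(pmulr_lgt0 _ (_ : 0 < n%:R - a)); lra.
have le_w : (1 - a) * w <= (n%:R - 1) * w by rewrite ler_pM2r //; lra.
have aw0 : 0 <= (1 - a) * w by apply: mulr_ge0; lra.
have y01 : 0 <= a - (1 - a) * w <= 1 by apply/andP; split; lra.
exists (a - (1 - a) * w) => //.
rewrite response_payoff_curved //; last lra.
have -> : w + (a - (1 - a) * w) = a * (1 + w) by ring.
have -> : 1 - (a - (1 - a) * w) = (1 - a) * (1 + w) by ring.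
rewrite cobb_douglas_at_peak //; last lra.
by rewrite mulrCA ltr_pMr // peak_gt0.
Qed.

Lemma response_payoff_at_ability (T : R) : n%:R * m <= T + a ->
  response_payoff n m a T a = peak a.
Proof.
move: n_ge2R => n2 le_m.
rewrite /response_payoff max_r ?addr0 // subr_le0 ler_pdivlMr; last lra.
by rewrite mulrC.
Qed.

Lemma ability_best_response_iff (T : R) : n%:R * m <= T + a ->
  (forall y, 0 <= y <= 1 -> response_payoff n m a T y <= response_payoff n m a T a) <->
  (n%:R - 1) * J a n m <= T.
Proof.
move: n_ge2R => n2 le_m; rewrite response_payoff_at_ability //.
have n1_gt0 : 0 < n%:R - 1 :> R by lra.
pose w := (n%:R * m - T) / (n%:R - 1).
have Tw : T = n%:R * m - (n%:R - 1) * w.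
  by rewrite /w mulrCA mulfV ?gt_eqF // mulr1; lra.
rewrite Tw scaled_J_le_iff //; split => [no_dev | le_bw y y01].
  rewrite leNgt; apply/negP => lt_bw.
  have [|y y01 lt_peak] := response_payoff_gt_peak _ lt_bw; first lra.
  by have := no_dev y y01; lra.
exact: response_payoff_le_peak.
Qed.

End BestResponse.

Lemma sum_deviate (n : nat) (x : nat -> R) (i : nat) (y : R) : (i < n)%N ->
  \sum_(j < n) deviate x i y j = \sum_(j < n) x j - x i + y.
Proof.
move=> lt_i; rewrite (bigD1 (Ordinal lt_i)) //= [in RHS](bigD1 (Ordinal lt_i)) //=.
rewrite [in LHS]/deviate eqxx (eq_bigr (fun j : 'I_n => x j)) => [|j]; first by ring.
by rewrite -val_eqE /deviate /= => /negbTE ->.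
Qed.

Lemma payoff_deviate (n : nat) (m : R) (alpha x : nat -> R) (i : nat) (y : R) :
  (i < n)%N -> payoff n m alpha (deviate x i y) i =
  response_payoff n m (alpha i) (\sum_(j < n) x j - x i) y.
Proof. by move=> lt_i; rewrite /payoff /grade /xbar sum_deviate // /deviate eqxx. Qed.

Lemma payoff_response (n : nat) (m : R) (alpha x : nat -> R) (i : nat) :
  payoff n m alpha x i = response_payoff n m (alpha i) (\sum_(j < n) x j - x i) (x i).
Proof. by rewrite /payoff /grade /xbar /response_payoff subrK. Qed.

Lemma le_xbar (n : nat) (m : R) (x : nat -> R) : (0 < n)%N ->
  (m <= xbar n x) = (n%:R * m <= \sum_(j < n) x j).
Proof. by move=> n_gt0; rewrite /xbar ler_pdivlMr ?ltr0n // mulrC. Qed.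

Lemma threshold_le_xbar_iff (n : nat) (m : R) (alpha : nat -> R) : (0 < n)%N ->
  threshold n m alpha <= xbar n alpha <->
  (forall i, (i < n)%N -> (n%:R - 1) * J (alpha i) n m + alpha i <= \sum_(j < n) alpha j).
Proof.
move=> n_gt0; rewrite /threshold /xbar ler_pM2r ?invr_gt0 ?ltr0n //.
split => [/bigmax_leP[_ le_F] i lt_i | le_F]; first exact: (le_F (Ordinal lt_i)).
by apply/bigmax_leP; split => [|i _]; apply: le_F.
Qed.

Lemma no_curve_NE_at_abilities_iff (n : nat) (m : R) (alpha : nat -> R) :
  (2 <= n)%N -> (forall i, (i < n)%N -> 0 < alpha i < 1) ->
  n%:R * m <= \sum_(j < n) alpha j ->
  is_no_curve_NE n m alpha alpha <->
  (forall i, (i < n)%N -> (n%:R - 1) * J (alpha i) n m + alpha i <= \sum_(j < n) alpha j).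
Proof.
move=> n_ge2 alpha01 le_m; have n_gt0 : (0 < n)%N by apply: leq_trans n_ge2.
have alpha_range i : (i < n)%N -> 0 <= alpha i <= 1.
  by move=> /alpha01/andP[a0 a1]; rewrite !ltW.
rewrite /is_no_curve_NE /is_pure_NE le_xbar //.
split => [[[_ no_dev] _] i lt_i | best].
  rewrite -lerBrDr -(ability_best_response_iff n_ge2 (alpha01 i lt_i)) ?subrK //.
  by move=> y y01; rewrite -payoff_deviate // -payoff_response; apply: no_dev.
split=> //; split=> // i lt_i y y01.
rewrite payoff_deviate // payoff_response; move: y y01.
by apply/(ability_best_response_iff n_ge2 (alpha01 i lt_i)); rewrite ?subrK ?lerBrDr ?best.
Qed.

Lemma threshold_bounds (n : nat) (m : R) (alpha : nat -> R) :
  (2 <= n)%N -> (forall i, (i < n)%N -> 0 < alpha i < 1) ->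
  m <= threshold n m alpha <= m + n%:R^-1.
Proof.
move=> n_ge2 alpha01; have n_gt0 : (0 < n)%N by apply: leq_trans n_ge2.
have n_gt0R : 0 < n%:R :> R by rewrite ltr0n.
have le_F i : (i < n)%N -> (n%:R - 1) * J (alpha i) n m + alpha i <= n%:R * m + 1.
  move=> /[dup] lt_i /alpha01/andP[a0 a1].
  by have := scaled_J_le n_ge2 (alpha01 i lt_i) m; lra.
rewrite /threshold; apply/andP; split.
  rewrite ler_pdivlMr // mulrC.
  apply: le_trans (le_scaled_J_add n_ge2 (alpha01 0%N n_gt0) m) _.
  exact: (le_bigmax _ (fun i : 'I_n => (n%:R - 1) * J (alpha i) n m + alpha i)
    (Ordinal n_gt0)).
rewrite ler_pdivrMr //.
have -> : (m + n%:R^-1) * n%:R = n%:R * m + 1 by field; rewrite gt_eqF.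
by apply: bigmax_le => [|i _]; apply: le_F.
Qed.

End CurvedExam.

Lemma cvg_invn {R : realType} : (n%:R^-1 : R) @[n --> \oo] --> 0.
Proof.
apply/gtr0_cvgV0; last exact: cvgr_idn.
by near=> n; rewrite ltr0n; near: n; exists 1%N.
Unshelve. all: by end_near.
Qed.

Theorem mainTheorem11 (R : realType) :
  (forall (n : nat) (m : R) (alpha : nat -> R),
     (2 <= n)%N -> 0 < m < 1 -> (forall i, (i < n)%N -> 0 < alpha i < 1) ->
     (is_no_curve_NE n m alpha alpha <->
        threshold n m alpha <= xbar n alpha)) /\
  (forall (m : R) (alpha : nat -> R),
     0 < m < 1 -> (forall i, 0 < alpha i < 1) ->
     (fun n : nat => threshold n m alpha) @ \oo --> m).
Proof.
split=> [n m alpha n_ge2 _ alpha01 | m alpha _ alpha01].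
  have n_gt0 : (0 < n)%N by apply: leq_trans n_ge2.
  rewrite threshold_le_xbar_iff //; split => [NE | best].
    have [_ le_m] := NE; rewrite le_xbar // in le_m.
    exact/(no_curve_NE_at_abilities_iff n_ge2 alpha01 le_m).
  apply/(no_curve_NE_at_abilities_iff n_ge2 alpha01) => //.
  exact: le_trans (le_scaled_J_add n_ge2 (alpha01 0%N n_gt0) m) (best 0%N n_gt0).
apply: (@squeeze_cvgr _ _ _ _ (fun=> m) (fun n => m + n%:R^-1)).
- by near=> n; apply: threshold_bounds => //; near: n; exists 2%N.
- exact: cvg_cst.
- by rewrite -[X in _ --> X]addr0; apply: cvgD; [exact: cvg_cst | exact: cvg_invn].
Unshelve. all: by end_near.
Qed.
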